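(* Let $d,g\ge 1$ be integers and $n=dg$. In the network $\mathrm{POPS}(d,g)$, any permutation $\pi$ of $\{0,\dots,n-1\}$ can be routed using one slot when $d=1$ and $2\lceil d/g\rceil$ slots when $d>1$.
   Context: The network $\mathrm{POPS}(d,g)$ (Partitioned Optical Passive Stars network) has $n=dg$ processors indexed $0,\dots,n-1$; processor $i$ belongs to group $\mathrm{group}(i):=\lfloor i/d\rfloor\in\{0,\dots,g-1\}$, so each group has $d$ processors. For each pair of groups $a,b\in\{0,\dots,g-1\}$ there is a coupler $c(b,a)$ whose sources are the processors of group $a$ and whose destinations are the processors of group $b$ ($g^2$ couplers in total). Processor $i$ can transmit to the couplers $c(a,\mathrm{group}(i))$, $a=0,\dots,g-1$, and can receive from the couplers $c(\mathrm{group}(i),b)$, $b=0,\dots,g-1$. Computation proceeds in synchronous steps called slots: in one slot each processor, in parallel, performs local computation, sends one packet to any subset of its transmitters (couplers), and receives a packet from one of its receivers (obtaining the packet sent on that coupler in that slot); it is required that no two processors send a packet to the same coupler in the same slot. Processors may store packets in local memory between slots. Routing a permutation $\pi$ of $\{0,\dots,n-1\}$ means: initially processor $i$ holds a packet $p_i$ with destination $\pi(i)$, for each $i$, and at the end each packet $p_i$ must be at processor $\pi(i)$. *)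

From mathcomp Require Import all_boot fingroup perm.
Set Implicit Arguments. Unset Strict Implicit. Unset Printing Implicit Defensive.

(* Processors are 'I_n (n = d*g); processor i is in group i %/ d.
   Packets are identified by their origin processor (packet p_i is named i).
   A coupler c(b,a) is determined by its source group a and destination group b. *)

(* One slot: each processor optionally sends one packet to a set of couplers
   c(a, group i), given by the set A of destination groups a; and optionally
   chooses one receiver, i.e. a coupler c(group j, b), given by b. *)
Record slot (n g : nat) := Slot {
  snd : 'I_n -> option ('I_n * {set 'I_g});
  rcv : 'I_n -> option 'I_g }.

(* The slot is legal given current memories: a processor only sends a packet it
   holds, and no two processors send on the same coupler (two distinct
   processors of the same source group use disjoint sets of destination groups;
   processors of different groups use different couplers anyway). *)
Definition valid_slot (d n g : nat) (mem : 'I_n -> {set 'I_n}) (s : slot n g) : Prop :=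
  (forall i p A, snd s i = Some (p, A) -> p \in mem i) /\
  (forall (i i' : 'I_n) p p' A A', i != i' -> i %/ d = i' %/ d ->
     snd s i = Some (p, A) -> snd s i' = Some (p', A') -> [disjoint A & A']).

Definition received (d n g : nat) (s : slot n g) (j : 'I_n) : {set 'I_n} :=
  match rcv s j with
  | None => set0
  | Some b => [set p | [exists i : 'I_n, (i %/ d == val b) &&
                 (match snd s i with
                  | Some (q, A) => (q == p) && [exists a in A, val a == j %/ d]
                  | None => false end)]]
  end.

Definition step (d n g : nat) (mem : 'I_n -> {set 'I_n}) (s : slot n g) : 'I_n -> {set 'I_n} :=
  fun j => mem j :|: received d s j.

Fixpoint routes_from (d n g : nat) (pi : {perm 'I_n}) (mem : 'I_n -> {set 'I_n})
    (sched : seq (slot n g)) : Prop :=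
  match sched with
  | [::] => forall i, i \in mem (pi i)
  | s :: rest => valid_slot d mem s /\ routes_from d pi (step d mem s) rest
  end.

Definition routes (d g : nat) (pi : {perm 'I_(d * g)}) (sched : seq (slot (d * g) g)) : Prop :=
  routes_from d pi (fun i => [set i]) sched.

Definition ceil_div (m k : nat) : nat := (m + k - 1) %/ k.

(* The packets form a d-regular bipartite multigraph on the groups: packet p is an
   edge from group p / d to group pi(p) / d.  Adding t = max(d,g) - d dummy vertices
   on each side, joined to all real vertices of the other side, makes it
   max(d,g)-regular, so by Konig's theorem (from Hall's) it has a proper edge
   coloring with max(d,g) colors, and the dummy edges leave at most d real packets
   in each color class.  A packet of color k is routed in round k / g: one slot
   from its source to a processor of group k mod g (indexed by its position in its
   color class), and one slot from there to its destination.  Properness means no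
   coupler is used twice in a round, the class index keeps the intermediate
   processors of a round distinct, and there are ceil(max(d,g) / g) = ceil(d / g)
   rounds.  For d = 1 the groups are single processors and one direct slot
   suffices. *)

From mathcomp Require Import all_boot fingroup perm.
From mathcomp Require Import zify.
Set Implicit Arguments. Unset Strict Implicit. Unset Printing Implicit Defensive.

(** * Hall's marriage theorem *)

Section Hall.
Variables (T U : finType) (y0 : U).
Implicit Types (R : T -> U -> bool) (X Y S : {set T}) (B : {set U}) (f : T -> U).

Definition nbr R S : {set U} := [set y | [exists x in S, R x y]].

Definition hall_cond R X := forall S, S \subset X -> #|S| <= #|nbr R S|.

Definition is_matching R X f := {in X, forall x, R x (f x)} /\ {in X &, injective f}.

Definition avoid R B x y := R x y && (y \notin B).

Lemma nbrU R S1 S2 : nbr R (S1 :|: S2) = nbr R S1 :|: nbr R S2.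
Proof.
apply/setP=> y; rewrite !inE; apply/existsP/orP.
  by case=> x /andP[]; rewrite inE => /orP[] xS Rxy; [left|right];
    apply/existsP; exists x; rewrite xS.
by case=> /existsP[x /andP[xS Rxy]]; exists x; rewrite inE xS ?orbT.
Qed.

Lemma nbr_avoid R B S : nbr (avoid R B) S = nbr R S :\: B.
Proof.
apply/setP=> y; rewrite !inE.
apply/existsP/andP => [[x /andP[xS /andP[Rxy yB]]] | [yB /existsP[x /andP[xS Rxy]]]].
  by split=> //; apply/existsP; exists x; rewrite xS.
by exists x; rewrite xS /avoid Rxy.
Qed.

Lemma hall_condS R X1 X2 : X1 \subset X2 -> hall_cond R X2 -> hall_cond R X1.
Proof. by move=> sX12 hR S sSX1; apply/hR/(subset_trans sSX1). Qed.

Lemma is_matching_glue R X1 X2 B f1 f2 :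
  is_matching R X1 f1 -> {in X1, forall x, f1 x \in B} ->
  is_matching (avoid R B) X2 f2 ->
  is_matching R (X1 :|: X2) (fun x => if x \in X1 then f1 x else f2 x).
Proof.
move=> [R1 inj1] f1B [R2 inj2]; have X2B x : x \in X2 -> f2 x \notin B.
  by case/R2/andP.
split=> [x | x x']; rewrite ?inE.
  by case: ifP => [/R1 | _ /= /R2/andP[]].
case: ifP => x1; case: ifP => x1' /= X2x X2x'.
- exact: inj1.
- by move=> e; move: (X2B _ X2x'); rewrite -e f1B.
- by move=> e; move: (X2B _ X2x); rewrite e f1B.
- exact: inj2.
Qed.

Section Step.
Variable X : {set T}.
Hypothesis IH : forall R Y, #|Y| < #|X| -> hall_cond R Y -> exists f, is_matching R Y f.

Lemma hall_tight R S : hall_cond R X -> S \proper X -> S != set0 ->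
  #|nbr R S| = #|S| -> exists f, is_matching R X f.
Proof.
move=> hR pSX S0 tight; have sSX := proper_sub pSX.
have [f1 m1] := IH (proper_card pSX) (hall_condS sSX hR).
have [f2 m2] : exists f, is_matching (avoid R (nbr R S)) (X :\: S) f.
  apply: IH.
    rewrite cardsDS // -(subnKC (proper_card pSX)); move: S0; rewrite -card_gt0; lia.
  move=> S'; rewrite subsetD => /andP[sS'X disj].
  rewrite nbr_avoid -[_ :\: _]setU0 -(setDv (nbr R S)) -setDUl cardsDS ?subsetUr // -nbrU.
  have := hR (S' :|: S); rewrite cardsU (disjoint_setI0 disj) cards0 subn0 tight.
  by rewrite subUset sSX sS'X; lia.
exists (fun x => if x \in S then f1 x else f2 x).
have -> : X = S :|: X :\: S by rewrite setDE setUIr setUCr setIT (setUidPr sSX).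
apply: (is_matching_glue m1 _ m2) => x xS; rewrite inE; apply/existsP; exists x.
by rewrite xS m1.1.
Qed.

Lemma hall_slack R x0 : hall_cond R X -> x0 \in X ->
  (forall S, S \proper X -> S != set0 -> #|S| < #|nbr R S|) ->
  exists f, is_matching R X f.
Proof.
move=> hR x0X slack.
have /card_gt0P[y1] : 0 < #|nbr R [set x0]|.
  by apply: leq_trans (hR _ _); rewrite ?cards1 ?sub1set.
rewrite inE => /existsP[_ /andP[/set1P-> Rx0y1]].
have [f2 m2] : exists f, is_matching (avoid R [set y1]) (X :\ x0) f.
  apply: IH; first by rewrite (cardsD1 x0 X) x0X.
  move=> S sS; rewrite nbr_avoid; have [->|S0] := eqVneq S set0; first by rewrite cards0.
  have pSX : S \proper X.
    rewrite properEneq (subset_trans sS) ?subsetDl // andbT.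
    by apply: contraTneq sS => ->; apply/subsetPn; exists x0; rewrite ?setD11.
  have := slack _ pSX S0; rewrite (cardsD1 y1 (nbr R S)).
  by case: (y1 \in _); lia.
exists (fun x => if x \in [set x0] then y1 else f2 x).
rewrite -(setD1K x0X); apply: (is_matching_glue _ _ m2) => [|x _]; last exact: set11.
by split=> [x /set1P-> | x x' /set1P-> /set1P->].
Qed.
End Step.

Theorem hall_marriage R X : hall_cond R X -> exists f, is_matching R X f.
Proof.
elim: {X}_.+1 {-2}X (ltnSn #|X|) R => // n IHn X ltXn R hR.
have IH R' Y : #|Y| < #|X| -> hall_cond R' Y -> exists f, is_matching R' Y f.
  by move=> ltYX; apply: IHn; apply: leq_trans ltYX _.
have [->|[x0 x0X]] := set_0Vmem X; first by exists (fun=> y0); split=> x; rewrite inE.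
have [/existsP[S /and3P[pSX S0 /eqP tight]] | /existsPn not_tight] :=
  boolP [exists S : {set T}, [&& S \proper X, S != set0 & #|nbr R S| == #|S|]].
  exact (hall_tight IH hR pSX S0 tight).
apply: (hall_slack IH hR x0X) => S pSX S0; have := hR S (proper_sub pSX).
by move: (not_tight S); rewrite pSX S0 /= leq_eqVlt eq_sym => /negPf->.
Qed.
End Hall.

(** * Konig's edge-coloring theorem *)

Section Fibres.
Variables (E W : finType) (w : E -> W).
Implicit Types (F M : {set E}).

Definition regular_side F k := forall x, #|[set e in F | w e == x]| = k.

Definition proper_at C F (col : E -> C) := {in F &, injective (fun e => (w e, col e))}.

Lemma card_regular_side F k (S : {set W}) :
  regular_side F k -> #|[set e in F | w e \in S]| = #|S| * k.
Proof.
move=> hF; rewrite -sum1_card (partition_big w (fun x => x \in S)) => [|e]; last first.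
  by rewrite inE => /andP[].
rewrite -sum_nat_const; apply: eq_bigr => x xS; rewrite -(hF x) -sum1_card.
by apply: eq_bigl => e; rewrite !inE; case: eqP => [->|]; rewrite ?xS ?andbF ?andbT.
Qed.

Lemma regular_side1_inj M : regular_side M 1 -> {in M &, injective w}.
Proof.
move=> hM e e' eM e'M we; have /eqP/cards1P[e0 M_we] := hM (w e).
have : e \in [set e0] by rewrite -M_we inE eM /=.
have : e' \in [set e0] by rewrite -M_we inE e'M we /=.
by move=> /set1P-> /set1P->.
Qed.

Lemma regular_sideD F M k l : M \subset F ->
  regular_side F k -> regular_side M l -> regular_side (F :\: M) (k - l).
Proof.
move=> sMF hF hM x; rewrite -(hF x) -(hM x) -cardsDS.
  by apply: eq_card => e; rewrite !inE; case: (w e == x); rewrite ?andbT ?andbF // andbC.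
by apply/subsetP=> e; rewrite !inE => /andP[/(subsetP sMF)-> ->].
Qed.

Lemma proper_at_every_color K F (col : E -> 'I_K) x c :
  proper_at F col -> #|[set e in F | w e == x]| = K ->
  exists e, [/\ e \in F, w e = x & col e = c].
Proof.
set S := [set e in F | w e == x] => hcol cardS.
have : c \in col @: S.
  have /eqP-> : col @: S == [set: 'I_K].
    rewrite eqEcard subsetT cardsT card_ord -[X in X <= _]cardS card_in_imset ?leqnn //.
    move=> e e'; rewrite !inE => /andP[eF /eqP we] /andP[e'F /eqP we'] ce.
    by apply: hcol; rewrite //= we we' ce.
  exact: in_setT.
by case/imsetP=> e; rewrite inE => /andP[eF /eqP we] ->; exists e.
Qed.

Lemma proper_at_add_class k F M (col : E -> 'I_k) :
  M \subset F -> {in M &, injective w} -> proper_at (F :\: M) col ->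
  proper_at F (fun e => if e \in M then ord_max else widen_ord (leqnSn k) (col e)).
Proof.
move=> sMF injM hcol e e' eF e'F [] we; case: ifP => eM; case: ifP => e'M.
- by move=> _; apply: injM.
- by move/(congr1 val) => /= ke; move: (ltn_ord (col e')); rewrite -ke ltnn.
- by move/(congr1 val) => /= ke; move: (ltn_ord (col e)); rewrite ke ltnn.
- move/(congr1 val) => /= /val_inj ce.
  by apply: hcol; rewrite ?inE ?eM ?e'M //= we ce.
Qed.
End Fibres.

Section Konig.
Variables (E U V : finType) (u : E -> U) (v : E -> V).
Implicit Types (F M : {set E}).

Definition regular F k := regular_side u F k /\ regular_side v F k.

Definition proper_coloring C F (col : E -> C) := proper_at u F col /\ proper_at v F col.

Lemma regular_card_eq F k : 0 < k -> regular F k -> #|U| = #|V|.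
Proof.
move=> k_gt0 [hu hv]; apply/eqP; rewrite -(eqn_pmul2r k_gt0) -!cardsT.
rewrite -(card_regular_side _ hu) -(card_regular_side _ hv).
by apply/eqP/eq_card => e; rewrite !inE.
Qed.

Lemma regular_perfect_matching F k :
  regular F k.+1 -> exists2 M : {set E}, M \subset F & regular M 1.
Proof.
move=> hF; have cardUV := regular_card_eq (ltn0Sn k) hF; case: hF => hu hv.
have [y0 _ | V0] := pickP (@predT V); last first.
  have U0 : #|U| = 0 by rewrite cardUV; apply: eq_card0.
  exists set0; first exact: sub0set.
  by split=> x; [have := card0_eq U0 x | have := V0 x].
pose R a b := [exists e in F, (u e == a) && (v e == b)].
have [f [fR f_inj]] : exists f, is_matching R [set: U] f.
  apply: (hall_marriage y0) => S _.
  have : [set e in F | u e \in S] \subset [set e in F | v e \in nbr R S].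
    apply/subsetP=> e; rewrite !inE => /andP[eF ueS]; rewrite eF.
    by apply/existsP; exists (u e); rewrite ueS; apply/existsP; exists e; rewrite eF !eqxx.
  move/subset_leq_card.
  by rewrite (card_regular_side _ hu) (card_regular_side _ hv) leq_pmul2r.
have {}f_inj : injective f by move=> a a'; apply: f_inj; rewrite inE.
have [f' fK f'K] := inj_card_bij f_inj (eq_leq (esym cardUV)).
have /fin_all_exists[ea ea_edge] : forall a, exists e, [/\ e \in F, u e = a & v e = f a].
  move=> a.
  by have /existsP[e /and3P[eF /eqP ue /eqP ve]] := fR a (in_setT a); exists e.
exists (ea @: [set: U]).
  by apply/subsetP=> _ /imsetP[a _ ->]; case: (ea_edge a).
split=> x; apply/eqP/cards1P.
  exists (ea x); apply/setP=> e; rewrite !inE.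
  apply/andP/eqP => [[/imsetP[a _ ->] /eqP] | ->].
    by case: (ea_edge a) => _ -> _ ->.
  by case: (ea_edge x) => _ -> _; rewrite imset_f ?inE.
exists (ea (f' x)); apply/setP=> e; rewrite !inE.
apply/andP/eqP => [[/imsetP[a _ ->] /eqP] | ->].
  by case: (ea_edge a) => _ _ -> <-; rewrite fK.
by case: (ea_edge (f' x)) => _ _ ->; rewrite f'K imset_f ?inE.
Qed.

Theorem konig_edge_coloring F k :
  0 < k -> regular F k -> exists col : E -> 'I_k, proper_coloring F col.
Proof.
elim: k F => // -[_ F _ [hu hv] | k IH F _ hF].
  by exists (fun=> ord0); split=> e e' eF e'F [we];
    [exact: (regular_side1_inj hu) | exact: (regular_side1_inj hv)].
have [M sMF [hMu hMv]] := regular_perfect_matching hF.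
have [|col [cu cv]] := IH (F :\: M) isT.
  by case: hF => hu hv; rewrite -[k.+1]/(k.+2 - 1); split; apply: regular_sideD.
exists (fun e => if e \in M then ord_max else widen_ord (leqnSn _) (col e)).
by split; apply: proper_at_add_class; rewrite //; apply: regular_side1_inj.
Qed.
End Konig.

(** * Colorings with small color classes *)

Lemma card_set_sum (A B : finType) (P : pred (A + B)) :
  #|[set e | P e]| = #|[set x | P (inl x)]| + #|[set y | P (inr y)]|.
Proof.
by rewrite -!sum1_card big_sumType; congr (_ + _); apply: eq_bigl => x; rewrite !inE.
Qed.

Lemma card_set_fst (A B : finType) (a : A) : #|[set z : A * B | z.1 == a]| = #|B|.
Proof.
rewrite -[RHS]mul1n -(cards1 a) -cardsT -cardsX.
by apply: eq_card => -[x y]; rewrite !inE andbT.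
Qed.

Lemma card_set_snd (A B : finType) (b : B) : #|[set z : A * B | z.2 == b]| = #|A|.
Proof.
rewrite -[RHS]muln1 -(cards1 b) -cardsT -cardsX.
by apply: eq_card => -[x y]; rewrite !inE.
Qed.

Section Padding.
Variables (E U V : finType) (u : E -> U) (v : E -> V) (d : nat).
Hypotheses (d_gt0 : 0 < d) (hreg : regular u v [set: E] d).
Local Notation K := (maxn d #|U|).
Local Notation t := (K - d).

Definition pad_edge := (E + (U * 'I_t + 'I_t * V))%type.

Definition pad_u (e : pad_edge) : U + 'I_t :=
  match e with inl e => inl (u e) | inr (inl z) => inl z.1 | inr (inr z) => inr z.1 end.

Definition pad_v (e : pad_edge) : V + 'I_t :=
  match e with inl e => inl (v e) | inr (inl z) => inr z.2 | inr (inr z) => inl z.2 end.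

Lemma pad_regular : regular pad_u pad_v [set: pad_edge] K.
Proof.
have cardUV := regular_card_eq d_gt0 hreg; case: hreg => hu hv.
have deg (W : finType) (w : E -> W) x : regular_side w [set: E] d -> #|[set e | w e == x]| = d.
  by move=> hw; rewrite -(hw x) setIdE setTI.
(* [set g := #|U|] unifies the syntactically different instances of #|U| (one
   comes from the type 'I_t) into the single atom that lia needs. *)
split=> -[a|x]; rewrite setIdE setTI card_set_sum card_set_sum -!sum_eqE /=.
- by rewrite deg // card_set_fst cards0 card_ord; lia.
- by rewrite !cards0 card_set_fst -cardUV; have := ltn_ord x; set g := #|U|; lia.
- by rewrite deg // card_set_snd cards0 card_ord; lia.
- by rewrite !cards0 card_set_snd; have := ltn_ord x; set g := #|U|; lia.
Qed.

Lemma pad_class_card (col : pad_edge -> 'I_K) :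
  proper_coloring pad_u pad_v [set: pad_edge] col ->
  forall c, #|[set e : E | col (inl e) == c]| <= d.
Proof.
move=> [cu cv] c; set P := [set e : E | _].
set Q := [set z : U * 'I_t | col (inr (inl z)) == c].
have same_u e1 e2 : col e1 = c -> col e2 = c -> pad_u e1 = pad_u e2 -> e1 = e2.
  by move=> c1 c2 ue; apply: cu; rewrite ?inE //= ue c1 c2.
(* Each of the t dummy destinations y has an edge (a, y) of color c ([Q_ge]), and
   these sources a are unavailable to the real edges of color c ([PQ_le]). *)
have PQ_le : #|P| + #|Q| <= #|U|.
  have injP : {in P &, injective u}.
    move=> e e'; rewrite !inE => /eqP c1 /eqP c2 ue.
    by case: (same_u (inl e) (inl e') c1 c2 (congr1 inl ue)).
  have injQ : {in Q &, injective (fun z => z.1)}.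
    move=> z z'; rewrite !inE => /eqP c1 /eqP c2 ue.
    by case: (same_u (inr (inl z)) (inr (inl z')) c1 c2 (congr1 inl ue)).
  have disj : u @: P :&: [set z.1 | z in Q] = set0.
    apply/setP=> a; rewrite !inE; apply/negP => /andP[/imsetP[e eP ->] /imsetP[z zQ ue]].
    move: eP zQ; rewrite !inE => /eqP c1 /eqP c2.
    by have := same_u (inl e) (inr (inl z)) c1 c2 (congr1 inl ue).
  rewrite -(card_in_imset injP) -(card_in_imset injQ) -cardsUI disj cards0 addn0.
  exact: max_card.
have Q_ge : t <= #|Q|.
  have : [set: 'I_t] \subset [set z.2 | z in Q].
    apply/subsetP=> y _.
    have [e [_]] := proper_at_every_color c cv (pad_regular.2 (inr y)).
    case: e => [e|[z|z]] //= [<-] ce.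
    by apply/imsetP; exists z; rewrite ?inE ?ce.
  move/subset_leq_card; rewrite cardsT card_ord => /leq_trans; apply.
  exact: leq_imset_card.
by move: PQ_le Q_ge; set g := #|U|; lia.
Qed.

Theorem equitable_coloring : exists col : E -> 'I_K,
  proper_coloring u v [set: E] col /\ forall c, #|[set e | col e == c]| <= d.
Proof.
have [col [cu cv]] := konig_edge_coloring (leq_trans d_gt0 (leq_maxl d #|U|)) pad_regular.
exists (fun e => col (inl e)); split; last exact: pad_class_card.
split=> e e' _ _ [we ce].
  by have [] : inl e = inl e' :> pad_edge by apply: cu; rewrite ?inE //= we ce.
by have [] : inl e = inl e' :> pad_edge by apply: cv; rewrite ?inE //= we ce.
Qed.
End Padding.

(** * Routing in POPS(d, g) *)

Lemma pick_inj (T T' : finType) (P : pred T) (f : T -> T') x :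
  {in P &, injective f} -> P x -> [pick y | P y & f y == f x] = Some x.
Proof.
move=> f_inj Px; case: pickP => [y /andP[Py /eqP fy] | /(_ x)]; last by rewrite Px eqxx.
by rewrite (f_inj _ _ Py Px fy).
Qed.

Lemma grp_lt d g (i : 'I_(d * g)) : i %/ d < g.
Proof. by case: d i => [[]|d i] //; rewrite ltn_divLR // [g * _]mulnC. Qed.

Definition grp d g (i : 'I_(d * g)) : 'I_g := Ordinal (grp_lt i).

Lemma card_grp d g (a : 'I_g) : 0 < d -> #|[set p : 'I_(d * g) | grp p == a]| = d.
Proof.
move=> d_gt0; have lt_ad (i : 'I_d) : a * d + i < d * g.
  by have := ltn_ord a; have := ltn_ord i; nia.
pose h i := Ordinal (lt_ad i).
have h_inj : injective h by move=> i j /(congr1 val) /= /addnI /val_inj.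
rewrite -[RHS]card_ord -cardsT -(card_imset _ h_inj); apply: eq_card => p.
rewrite !inE; apply/eqP/imsetP => [grp_p | [i _ ->]]; last first.
  by apply: val_inj; rewrite /= divnMDl // divn_small // addn0.
exists (Ordinal (ltn_pmod p d_gt0)); rewrite ?inE //; apply: val_inj => /=.
by rewrite -grp_p /= -divn_eq.
Qed.

Lemma regular_packets d g (pi : {perm 'I_(d * g)}) :
  0 < d -> regular (@grp d g) (fun p => grp (pi p)) [set: 'I_(d * g)] d.
Proof.
move=> d_gt0; split=> a; rewrite setIdE setTI; first exact: card_grp.
have -> : [set p | grp (pi p) == a] = pi @^-1: [set p | grp p == a].
  by apply/setP=> p; rewrite !inE.
by rewrite card_preimset ?card_grp //; exact: perm_inj.
Qed.

Lemma step_sub d n g (held : 'I_n -> {set 'I_n}) (s : slot n g) j :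
  held j \subset step d held s j.
Proof. exact: subsetUl. Qed.

Section Transfer.
Variables (d g : nat).
Local Notation n := (d * g).
Variables (P : pred 'I_n) (src dst : 'I_n -> 'I_n).
Implicit Type held : 'I_n -> {set 'I_n}.

Definition transfer : slot n g := Slot
  (fun i => if [pick p | P p & src p == i] is Some p then Some (p, [set grp (dst p)]) else None)
  (fun j => if [pick p | P p & dst p == j] is Some p then Some (grp (src p)) else None).

Hypotheses (src_inj : {in P &, injective src}) (dst_inj : {in P &, injective dst})
  (coupler_free : {in P &, forall p p',
     grp (src p) = grp (src p') -> grp (dst p) = grp (dst p') -> p = p'}).

Lemma transfer_valid held : {in P, forall p, p \in held (src p)} -> valid_slot d held transfer.
Proof.
move=> holds; split=> [i p A | i i' p p' A A' ne_ii' grp_ii'] /=.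
  by case: pickP => // p0 /andP[Pp0 /eqP <-] [<- _]; exact: holds.
case: pickP => // p0 /andP[Pp0 /eqP src0] [_ <-].
case: pickP => // p1 /andP[Pp1 /eqP src1] [_ <-].
rewrite disjoints1 inE; apply: contra ne_ii' => /eqP dst01.
rewrite -src0 -src1 (coupler_free Pp0 Pp1 _ dst01) //.
by apply: val_inj; rewrite /= src0 src1.
Qed.

Lemma transfer_delivers held p : P p -> p \in step d held transfer (dst p).
Proof.
move=> Pp; rewrite inE /received /= (pick_inj dst_inj Pp); apply/orP; right.
rewrite inE; apply/existsP; exists (src p); rewrite eqxx (pick_inj src_inj Pp) eqxx /=.
by apply/existsP; exists (grp (dst p)); rewrite set11 /=.
Qed.
End Transfer.

Lemma routes_one_slot d g (pi : {perm 'I_(d * g)}) :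
  (forall p p', grp p = grp p' -> grp (pi p) = grp (pi p') -> p = p') ->
  routes pi [:: transfer predT id pi].
Proof.
move=> coupler_free.
have id_inj : {in predT &, injective (@id 'I_(d * g))} := in2W (@inj_id _).
have pi_inj : {in predT &, injective pi} := in2W (@perm_inj _ pi).
have free : {in predT &, forall p q,
    grp (id p) = grp (id q) -> grp (pi p) = grp (pi q) -> p = q}.
  by move=> p q _ _; exact: coupler_free.
split; first by apply: (transfer_valid free) => p _; rewrite set11.
by move=> p; exact: (transfer_delivers id_inj pi_inj).
Qed.

Section TwoPhase.
Variables (d g : nat) (pi : {perm 'I_(d * g)}).
Variables (round : 'I_(d * g) -> nat) (mid : 'I_(d * g) -> 'I_(d * g)).
Hypotheses
  (mid_inj : forall p q, round p = round q -> mid p = mid q -> p = q)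
  (src_free : forall p q, round p = round q ->
     grp p = grp q -> grp (mid p) = grp (mid q) -> p = q)
  (dst_free : forall p q, round p = round q ->
     grp (mid p) = grp (mid q) -> grp (pi p) = grp (pi q) -> p = q).
Implicit Type held : 'I_(d * g) -> {set 'I_(d * g)}.

Definition in_round r p := round p == r.

Definition round_slots r := [:: transfer (in_round r) id mid; transfer (in_round r) mid pi].

Definition two_phase m := flatten [seq round_slots r | r <- iota 0 m].

Lemma size_two_phase m : size (two_phase m) = 2 * m.
Proof.
rewrite /two_phase; elim: m => // m IH.
by rewrite -addn1 iotaD map_cat flatten_cat size_cat IH mulnDr.
Qed.

Definition delivered_before r held :=
  (forall p, p \in held p) /\ (forall p, round p < r -> p \in held (pi p)).

Lemma round_slots_run r held : delivered_before r held ->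
  let held1 := step d held (transfer (in_round r) id mid) in
  [/\ valid_slot d held (transfer (in_round r) id mid),
      valid_slot d held1 (transfer (in_round r) mid pi) &
      delivered_before r.+1 (step d held1 (transfer (in_round r) mid pi))].
Proof.
move=> [own arrived] held1.
have in_r p q : in_round r p -> in_round r q -> round p = round q.
  by move=> /eqP-> /eqP->.
have mid_inj_r : {in in_round r &, injective mid}.
  by move=> p q rp rq; apply: mid_inj (in_r _ _ rp rq).
have pi_inj : {in in_round r &, injective pi} := in2W (@perm_inj _ pi).
have id_inj : {in in_round r &, injective (@id 'I_(d * g))} := in2W (@inj_id _).
have at_mid p : in_round r p -> p \in held1 (mid p) by exact: transfer_delivers.
have step2_sub j : held j \subset step d held1 (transfer (in_round r) mid pi) j.
  exact: subset_trans (step_sub d held _ j) (step_sub d held1 _ j).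
split.
- apply: transfer_valid => [p q rp rq | p _]; last exact: own.
  exact: src_free (in_r _ _ rp rq).
- apply: transfer_valid => [p q rp rq | p rp]; last exact: at_mid.
  exact: dst_free (in_r _ _ rp rq).
split=> p; first exact/(subsetP (step2_sub p))/own.
rewrite ltnS leq_eqVlt => /orP[/eqP rp | /arrived]; last exact: (subsetP (step2_sub _)).
by apply: transfer_delivers => //; rewrite /in_round rp.
Qed.

Lemma routes_from_two_phase r cnt held :
  (forall p, round p < r + cnt) -> delivered_before r held ->
  routes_from d pi held (flatten [seq round_slots r' | r' <- iota r cnt]).
Proof.
elim: cnt r held => [|cnt IH] r held bound inv.
  by move=> p; apply: inv.2; rewrite -[r]addn0; exact: bound.
have [valid1 valid2 inv'] := round_slots_run inv.
by do !split=> //; apply: IH inv' => p; rewrite addSnnS.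
Qed.

Theorem routes_two_phase m : (forall p, round p < m) -> routes pi (two_phase m).
Proof. by move=> bound; apply: routes_from_two_phase => //; split=> p; rewrite ?set11. Qed.
End TwoPhase.

Lemma ceil_divE m g : 0 < m -> 0 < g -> ceil_div m g = m.-1 %/ g + 1.
Proof.
by case: m => // m _ g_gt0; rewrite /ceil_div addSn subn1 divnDr ?dvdnn // divnn g_gt0.
Qed.

Lemma ceil_div_maxn d g : 0 < d -> 0 < g -> ceil_div (maxn d g) g = ceil_div d g.
Proof.
move=> d_gt0 g_gt0; have [//|lt_dg] := leqP g d.
by rewrite !ceil_divE ?(ltn_trans d_gt0 lt_dg) // !divn_small //; lia.
Qed.

Lemma ltn_div_ceil_div k K g : 0 < g -> k < K -> k %/ g < ceil_div K g.
Proof.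
move=> g_gt0 ltkK; rewrite ceil_divE ?(leq_ltn_trans (leq0n k) ltkK) // addn1 ltnS.
by apply: leq_div2r; lia.
Qed.

Section ColoringSchedule.
Variables (d g K : nat) (pi : {perm 'I_(d * g)}) (col : 'I_(d * g) -> 'I_K).
Hypotheses (g_gt0 : 0 < g)
  (col_proper : proper_coloring (@grp d g) (fun p => grp (pi p)) [set: 'I_(d * g)] col)
  (col_class : forall c, #|[set p | col p == c]| <= d).

Definition class_index p := index p (enum [set q | col q == col p]).

Lemma class_index_lt p : class_index p < d.
Proof.
apply: leq_trans (col_class (col p)); rewrite cardE index_mem mem_enum inE.
by rewrite eqxx.
Qed.

Lemma class_index_inj p q : col p = col q -> class_index p = class_index q -> p = q.
Proof.
rewrite /class_index => cpq; rewrite cpq => idx_pq.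
have p_in : p \in enum [set q' | col q' == col q] by rewrite mem_enum inE cpq.
by rewrite -(nth_index p p_in) idx_pq nth_index // mem_enum inE.
Qed.

Definition color_round p := col p %/ g.

Lemma color_mid_lt p : (col p %% g) * d + class_index p < d * g.
Proof. have := class_index_lt p; have := ltn_pmod (col p) g_gt0; nia. Qed.

Definition color_mid p : 'I_(d * g) := Ordinal (color_mid_lt p).

Lemma grp_color_mid p : val (grp (color_mid p)) = col p %% g.
Proof.
have d_gt0 : 0 < d by apply: leq_ltn_trans (class_index_lt p).
by rewrite /= divnMDl // divn_small ?class_index_lt // addn0.
Qed.

Lemma color_eq_of_round_mid p q : color_round p = color_round q ->
  grp (color_mid p) = grp (color_mid q) -> col p = col q.
Proof.
move=> rpq /(congr1 val); rewrite !grp_color_mid => mpq; apply: val_inj => /=.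
by rewrite (divn_eq (col p) g) (divn_eq (col q) g) -!/(color_round _) rpq mpq.
Qed.

Theorem routes_of_coloring :
  exists sched, size sched = 2 * ceil_div K g /\ routes pi sched.
Proof.
have [col_src col_dst] := col_proper.
exists (two_phase pi color_round color_mid (ceil_div K g)); split; first exact: size_two_phase.
apply: routes_two_phase => [p q rpq mpq | p q rpq gpq mpq | p q rpq mpq gpq | p].
- have cpq := color_eq_of_round_mid rpq (congr1 (@grp d g) mpq).
  apply: (class_index_inj cpq); move/(congr1 val): mpq => /=.
  by rewrite cpq => /eqP; rewrite eqn_add2l => /eqP.
- by apply: col_src; rewrite ?inE //= gpq (color_eq_of_round_mid rpq mpq).
- by apply: col_dst; rewrite ?inE //= gpq (color_eq_of_round_mid rpq mpq).
- exact: ltn_div_ceil_div.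
Qed.
End ColoringSchedule.

Theorem theorem2 (d g : nat) (hd : 0 < d) (hg : 0 < g) (pi : {perm 'I_(d * g)}) :
  exists sched : seq (slot (d * g) g),
    size sched = (if d == 1 then 1 else 2 * ceil_div d g) /\ @routes d g pi sched.
Proof.
case: ifP => [/eqP d1 | _].
  subst d; exists [:: transfer predT id pi]; split=> //.
  by apply: routes_one_slot => p q /(congr1 val) /=; rewrite !divn1 => /val_inj.
have [col [col_proper col_class]] := equitable_coloring hd (regular_packets pi hd).
have [sched [size_sched routes_sched]] := routes_of_coloring hg col_proper col_class.
by exists sched; rewrite size_sched card_ord ceil_div_maxn.
Qed.
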